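(* Let $X$ be a Banach space, let $\varphi: X\to(-\infty,\infty]$ be a proper lower semicontinuous function, let $\bar{x}\in\operatorname{dom}\varphi$, and let $\bar{x}^*\in X^*$. The following are equivalent: (i) $\varphi$ is prox-bounded and $\bar{x}^*$ is a proximal subgradient of $\varphi$ at $\bar{x}$; (ii) $P_\lambda^{\bar{x}^*}\varphi(\bar{x}) = \{\bar{x}\}$ for some $\lambda>0$; (iii) $P_\lambda^{\bar{x}^*}\varphi(\bar{x}) = \{\bar{x}\}$ for all $\lambda>0$ sufficiently small.
   Context: $\varphi$ is prox-bounded if there exist $\alpha,\beta\in\mathbb{R}$ and $x_0\in X$ with $\varphi(x)\ge \alpha\|x-x_0\|^2+\beta$ for all $x\in X$. $\bar{x}^*\in X^*$ is a proximal subgradient of $\varphi$ at $\bar{x}\in\operatorname{dom}\varphi$ if there exist $r>0$ and $\varepsilon>0$ such that $\varphi(x)\ge\varphi(\bar{x})+\langle\bar{x}^*,x-\bar{x}\rangle-\frac{r}{2}\|x-\bar{x}\|^2$ for all $x$ in the open ball of radius $\varepsilon$ centered at $\bar{x}$. For $x^*\in X^*$ and $\lambda>0$, the $x^*$-proximal mapping is $P_\lambda^{x^*}\varphi(x) := \operatorname{argmin}_{w\in X}\{\varphi(w)-\langle x^*,w\rangle+\frac{1}{2\lambda}\|w-x\|^2\}$, $x\in X$. *)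

From HB Require Import structures.
From mathcomp Require Import all_boot all_order all_algebra.
From mathcomp Require Import all_classical all_reals all_analysis.
Set Implicit Arguments. Unset Strict Implicit. Unset Printing Implicit Defensive.
Import Order.TTheory GRing.Theory Num.Theory.
Import numFieldNormedType.Exports.
Local Open Scope classical_set_scope.
Local Open Scope ring_scope.

(* Setting: X a Banach space over a realType R (completeNormedModType),
   phi : X -> \bar R, and elements of X^* are continuous linear maps
   X -> R (represented as {linear X -> R^o} plus a continuity hypothesis). *)

Definition proper_fun (R : realType) (X : normedModType R) (phi : X -> \bar R) :=
  (forall x, phi x != -oo%E) /\ (exists x, phi x != +oo%E).

Definition dom_fun (R : realType) (X : normedModType R) (phi : X -> \bar R) :=
  [set x | phi x < +oo]%E.

Definition prox_bounded (R : realType) (X : normedModType R) (phi : X -> \bar R) :=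
  exists (alpha beta : R) (x0 : X),
    forall x, ((alpha * `|x - x0| ^+ 2 + beta)%:E <= phi x)%E.

Definition proximal_subgradient (R : realType) (X : normedModType R)
  (phi : X -> \bar R) (xbar : X) (xs : X -> R) :=
  exists r eps : R, 0 < r /\ 0 < eps /\
    forall x, ball xbar eps x ->
      (phi xbar + (xs (x - xbar) - r / 2 * `|x - xbar| ^+ 2)%:E <= phi x)%E.

Definition prox_map (R : realType) (X : normedModType R)
  (phi : X -> \bar R) (xs : X -> R) (lambda : R) (x : X) : set X :=
  let F := fun w => (phi w + (- xs w + (2 * lambda)^-1 * `|w - x| ^+ 2)%:E)%E in
  [set w | forall u, (F w <= F u)%E].

(* Call xs a global proximal subgradient of modulus r when the proximal
   subgradient inequality holds on all of X.  If it does, xbar is the strict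
   minimiser of the xs-proximal objective for every lambda < 1/r; conversely,
   xbar minimising that objective for a single lambda is precisely the global
   inequality with modulus 1/lambda, which yields both prox-boundedness and a
   proximal subgradient.  Prox-boundedness turns a local proximal subgradient
   into a global one: away from xbar, the quadratic lower bound of phi beats
   the affine function xs (x - xbar) + const once the modulus is large. *)

From HB Require Import structures.
From mathcomp Require Import all_boot all_order all_algebra.
From mathcomp Require Import all_classical all_reals all_analysis.
From mathcomp Require Import ring lra.
Import Order.TTheory GRing.Theory Num.Theory.
Import numFieldNormedType.Exports.
Local Open Scope classical_set_scope.
Local Open Scope ring_scope.

Set Implicit Arguments.
Unset Strict Implicit.
Unset Printing Implicit Defensive.

Lemma argmin_eq_point (T : Type) (disp : Order.disp_t) (U : porderType disp)
    (F : T -> U) (t : T) :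
  (forall u, u <> t -> (F t < F u)%O) -> [set w | forall u, (F w <= F u)%O] = [set t].
Proof.
move=> Ft_lt; apply/seteqP; split=> [w /= Fw_le | _ -> u /=].
  by apply: contrapT => /Ft_lt/lt_geF; rewrite Fw_le.
by have [->|/Ft_lt/ltW] := pselect (u = t).
Qed.

Lemma exists_pos_of_small (R : realFieldType) (P : R -> Prop) :
  (exists l0, 0 < l0 /\ forall l, 0 < l -> l < l0 -> P l) -> exists l, 0 < l /\ P l.
Proof.
move=> [l0 [l0_gt0 HP]]; exists (l0 / 2).
by split; last apply: HP; lra.
Qed.

Section RealInequalities.
Variable R : realFieldType.

Lemma sqrrD_le (d c : R) : (d + c) ^+ 2 <= 2 * d ^+ 2 + 2 * c ^+ 2.
Proof. have := sqr_ge0 (d - c); rewrite sqrrB sqrrD; lra. Qed.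

Lemma mul_le_sqr_add (k d : R) : k * d <= d ^+ 2 + k ^+ 2 / 4.
Proof.
have -> : d ^+ 2 + k ^+ 2 / 4 = (d - k / 2) ^+ 2 + k * d by field.
by rewrite lerDr sqr_ge0.
Qed.

Lemma affine_le_quadratic (eps d k B : R) : 0 < eps -> eps <= d -> 0 <= k ->
  k * d + B <= (k / eps + `|B| / eps ^+ 2) * d ^+ 2.
Proof.
move=> eps_gt0 eps_le_d k_ge0.
have t_ge1 : 1 <= d / eps by rewrite ler_pdivlMr // mul1r.
have -> : (k / eps + `|B| / eps ^+ 2) * d ^+ 2
          = k * d * (d / eps) + `|B| * (d / eps) ^+ 2.
  by field; rewrite gt_eqF.
have d_ge0 : 0 <= d by rewrite (le_trans (ltW eps_gt0)).
apply: lerD; first by apply: ler_peMr; rewrite ?mulr_ge0.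
by apply: le_trans (ler_norm B) _; apply: ler_peMr; rewrite ?exprn_ege1.
Qed.

End RealInequalities.

Definition global_proximal_subgradient (R : realType) (X : normedModType R)
    (phi : X -> \bar R) (xbar : X) (xs : X -> R) (r : R) :=
  forall x, (phi xbar + (xs (x - xbar) - r / 2 * `|x - xbar| ^+ 2)%:E <= phi x)%E.

Lemma prox_bounded_centered (R : realType) (X : normedModType R)
    (phi : X -> \bar R) (xbar : X) :
  prox_bounded phi ->
  exists a b : R, 0 <= a /\ forall x, ((- (a * `|x - xbar| ^+ 2 + b))%:E <= phi x)%E.
Proof.
move=> [al [be [x0 phi_ge]]]; set c := `|xbar - x0|.
exists (2 * `|al|), (2 * `|al| * c ^+ 2 - be); split=> [|x]; first by rewrite mulr_ge0.
apply: le_trans (phi_ge x); rewrite lee_fin.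
have e_le : `|x - x0| <= `|x - xbar| + c.
  have -> : x - x0 = (x - xbar) + (xbar - x0) by rewrite addrA subrK.
  exact: ler_normD.
have e2_le : `|x - x0| ^+ 2 <= 2 * `|x - xbar| ^+ 2 + 2 * c ^+ 2.
  apply: le_trans (sqrrD_le _ _).
  by apply: lerXn2r; rewrite // nnegrE ?addr_ge0 ?normr_ge0.
have := ler_wpM2l (normr_ge0 al) e2_le.
have : - `|al| * `|x - x0| ^+ 2 <= al * `|x - x0| ^+ 2.
  by rewrite ler_wpM2r ?sqr_ge0 // (lerNnormlW (lexx _)).
lra.
Qed.

Section ProximalSubgradient.
Variables (R : realType) (X : normedModType R) (phi : X -> \bar R) (xbar : X).
Variable xs : {linear X -> R^o}.
Variable p : R.
Hypothesis phi_xbar : phi xbar = p%:E.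

Lemma prox_map_eq_center (r lam : R) :
  global_proximal_subgradient phi xbar xs r -> 0 < lam -> r < lam^-1 ->
  prox_map phi xs lam xbar = [set xbar].
Proof.
move=> phi_ge lam_gt0 r_lt; apply: argmin_eq_point => u /eqP u_neq.
have d_gt0 : 0 < `|u - xbar| by rewrite normr_gt0 subr_eq0.
rewrite subrr normr0 expr0n /= mulr0 addr0 phi_xbar -EFinD.
apply: (lt_le_trans _ (leeD (phi_ge u) (lexx _))).
rewrite phi_xbar -!EFinD lte_fin linearB /=.
have half_lt : r / 2 < (2 * lam)^-1.
  by rewrite invfM [X in _ < X]mulrC ltr_pM2r.
have : r / 2 * `|u - xbar| ^+ 2 < (2 * lam)^-1 * `|u - xbar| ^+ 2.
  by rewrite ltr_pM2r ?exprn_gt0.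
lra.
Qed.

Lemma global_proximal_subgradient_of_prox_map (lam : R) :
  prox_map phi xs lam xbar xbar -> global_proximal_subgradient phi xbar xs lam^-1.
Proof.
move=> xbar_min x; have := xbar_min x.
rewrite subrr normr0 expr0n /= mulr0 addr0 phi_xbar -EFinD -leeBlDr // -EFinB.
by apply: le_trans; rewrite lee_fin linearB invfM /=; lra.
Qed.

Lemma proximal_subgradient_of_global (r : R) : 0 < r ->
  global_proximal_subgradient phi xbar xs r -> proximal_subgradient phi xbar xs.
Proof. by move=> r_gt0 phi_ge; exists r, 1. Qed.

Variable k : R.
Hypothesis k_ge0 : 0 <= k.
Hypothesis xs_lip : forall v, `|xs v| <= k * `|v|.

Lemma prox_bounded_of_global (r : R) :
  global_proximal_subgradient phi xbar xs r -> prox_bounded phi.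
Proof.
move=> phi_ge; exists (- (r / 2 + 1)), (p - k ^+ 2 / 4), xbar => x.
apply: le_trans (phi_ge x); rewrite phi_xbar -EFinD lee_fin.
have := mul_le_sqr_add k `|x - xbar|.
move: (xs_lip (x - xbar)); rewrite ler_norml => /andP[xs_ge _].
lra.
Qed.

Lemma global_proximal_subgradient_of_local (a b : R) : 0 <= a ->
  (forall x, ((- (a * `|x - xbar| ^+ 2 + b))%:E <= phi x)%E) ->
  proximal_subgradient phi xbar xs ->
  exists2 r, 0 < r & global_proximal_subgradient phi xbar xs r.
Proof.
move=> a_ge0 phi_ge [r [eps [r_gt0 [eps_gt0 phi_ge_near]]]].
set N := k / eps + `|b + p| / eps ^+ 2.
have N_ge0 : 0 <= N by rewrite addr_ge0 ?divr_ge0 ?exprn_ge0 // ltW.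
exists (r + 2 * (a + N)) => [|x]; first by lra.
set d := `|x - xbar|.
have aN_d : 0 <= (a + N) * d ^+ 2 by rewrite mulr_ge0 ?sqr_ge0 // addr_ge0.
have r_d : 0 <= r * d ^+ 2 by rewrite mulr_ge0 ?sqr_ge0 // ltW.
have [d_lt|d_ge] := ltP d eps.
  apply: le_trans (phi_ge_near x _); last by rewrite -ball_normE /= distrC.
  by apply: leeD; rewrite // lee_fin -/d; lra.
apply: le_trans (phi_ge x); rewrite phi_xbar -EFinD lee_fin.
have := affine_le_quadratic (b + p) eps_gt0 d_ge k_ge0.
move: (xs_lip (x - xbar)); rewrite ler_norml => /andP[_ xs_le].
rewrite -/N -/d in xs_le *; lra.
Qed.

Lemma prox_bounded_proximal_subgradient_of_prox_map (lam : R) : 0 < lam ->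
  prox_map phi xs lam xbar = [set xbar] ->
  prox_bounded phi /\ proximal_subgradient phi xbar xs.
Proof.
move=> lam_gt0 prox_xbar.
have glob : global_proximal_subgradient phi xbar xs lam^-1.
  by apply: global_proximal_subgradient_of_prox_map; rewrite prox_xbar.
split; first exact: prox_bounded_of_global glob.
by apply: proximal_subgradient_of_global glob; rewrite invr_gt0.
Qed.

Lemma prox_map_eq_center_small :
  prox_bounded phi -> proximal_subgradient phi xbar xs ->
  exists lambda0, 0 < lambda0 /\ forall lambda, 0 < lambda -> lambda < lambda0 ->
    prox_map phi xs lambda xbar = [set xbar].
Proof.
move=> /(prox_bounded_centered xbar) [a [b [a_ge0 phi_ge]]] phi_sub.
have [r r_gt0 glob] := global_proximal_subgradient_of_local a_ge0 phi_ge phi_sub.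
exists r^-1; split=> [|lam lam_gt0 lam_lt]; first by rewrite invr_gt0.
have r_lt : r < lam^-1 by rewrite -(invrK r) ltf_pV2 ?posrE ?invr_gt0.
exact: prox_map_eq_center glob lam_gt0 r_lt.
Qed.

End ProximalSubgradient.

Theorem lemma4p2 (R : realType) (X : completeNormedModType R)
  (phi : X -> \bar R) (xbar : X) (xs : {linear X -> R^o}) :
  proper_fun phi -> lower_semicontinuous phi -> continuous xs ->
  dom_fun phi xbar ->
  [/\ (prox_bounded phi /\ proximal_subgradient phi xbar xs) <->
        (exists lambda : R, 0 < lambda /\ prox_map phi xs lambda xbar = [set xbar]),
      (exists lambda : R, 0 < lambda /\ prox_map phi xs lambda xbar = [set xbar]) <->
        (exists lambda0 : R, 0 < lambda0 /\
           forall lambda : R, 0 < lambda -> lambda < lambda0 ->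
             prox_map phi xs lambda xbar = [set xbar]) &
      (prox_bounded phi /\ proximal_subgradient phi xbar xs) <->
        (exists lambda0 : R, 0 < lambda0 /\
           forall lambda : R, 0 < lambda -> lambda < lambda0 ->
             prox_map phi xs lambda xbar = [set xbar])].
Proof.
move=> [phi_gtNy _] _ xs_cont xbar_dom.
have [k k_gt0 xs_lip] := linear_lipschitz xs_cont.
have phi_xbar : phi xbar = (fine (phi xbar))%:E.
  by rewrite fineK // fin_numE phi_gtNy lt_eqF.
have i_iii := prox_map_eq_center_small phi_xbar (ltW k_gt0) xs_lip.
have ii_i := prox_bounded_proximal_subgradient_of_prox_map phi_xbar xs_lip.
split; split.
- by case=> /i_iii iii /iii/exists_pos_of_small.
- by case=> lam [/ii_i].
- by case=> lam [/ii_i i /i [/i_iii]].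
- exact: exists_pos_of_small.
- by case=> /i_iii.
- by move=> /exists_pos_of_small [lam [/ii_i]].
Qed.
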